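(* Let $n\ge1$ and let $\mathbf{P}_{pen}=[p_{ij}]_{i,j=1}^{n+3}$ be a real symmetric non-negative definite matrix such that the $2\times2$ matrix $\begin{pmatrix}p_{1,1}&p_{1,n+3}\\ p_{n+3,1}&p_{n+3,n+3}\end{pmatrix}$ is invertible. Let $\Pi:\mathbb{R}^{n+3}\to\mathbb{R}^{n+1}$, $\Pi(u_1,\boldsymbol{p}^T,u_{n+1})^T=\boldsymbol{p}$, and for $\lambda>0$ let $\mathbf{H}_{\mathbf{P}_{pen}}(\lambda)=(\lambda\mathbf{P}_{pen}+\Pi^T\Pi)^{-1}$, so that $\mathbf{H}_{\mathbf{P}_{pen}}(\lambda)(0,\boldsymbol{y}^T,0)^T$ is the unique minimizer over $(u_1,\boldsymbol{p},u_{n+1})\in\mathbb{R}\times\mathbb{R}^{n+1}\times\mathbb{R}$ of $\lambda(u_1,\boldsymbol{p}^T,u_{n+1})\mathbf{P}_{pen}(u_1,\boldsymbol{p}^T,u_{n+1})^T+\|\boldsymbol{y}-\boldsymbol{p}\|^2$. Let $\boldsymbol{y}\in\mathbb{R}^{n+1}$. (1) As $\lambda\to0^+$, $\mathbf{H}_{\mathbf{P}_{pen}}(\lambda)(0,\boldsymbol{y}^T,0)^T\to(u_1^0,\boldsymbol{y}^T,u_{n+1}^0)^T$, where $(u_1^0,u_{n+1}^0)$ is a minimizer of $(u_1,u_{n+1})\mapsto(u_1,\boldsymbol{y}^T,u_{n+1})\mathbf{P}_{pen}(u_1,\boldsymbol{y}^T,u_{n+1})^T$, i.e. a solution of $$u_1p_{1,1}+u_{n+1}p_{1,n+3}=-\sum_{i=1}^{n+1}y_ip_{1,i+1},\qquad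 u_1p_{n+3,1}+u_{n+1}p_{n+3,n+3}=-\sum_{i=1}^{n+1}y_ip_{n+3,i+1}.$$ In particular, if $\boldsymbol{y}$ is not orthogonal to the space spanned by $(p_{1,j}:j=2,\dots,n+2)^T$ and $(p_{n+3,j}:j=2,\dots,n+2)^T$, then $u_1^0$ and $u_{n+1}^0$ are not both zero. (2) As $\lambda\to+\infty$, $\mathbf{H}_{\mathbf{P}_{pen}}(\lambda)(0,\boldsymbol{y}^T,0)^T\to\arg\min\{\|\boldsymbol{y}-\boldsymbol{p}\|^2:\ \mathbf{P}_{pen}(u_1,\boldsymbol{p}^T,u_{n+1})^T=0\}$.
   Context: Vectors of $\mathbb{R}^{n+3}$ are written $(u_1,\boldsymbol{p}^T,u_{n+1})^T$ with $u_1,u_{n+1}\in\mathbb{R}$ and $\boldsymbol{p}\in\mathbb{R}^{n+1}$ (in the paper these are the coordinates of a $C^2$ cubic spline: end second derivatives and knot values). $\|\cdot\|$ is the Euclidean norm. *)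

From HB Require Import structures.
From mathcomp Require Import all_boot all_order all_algebra.
From mathcomp Require Import all_classical all_reals all_analysis.
Set Implicit Arguments. Unset Strict Implicit. Unset Printing Implicit Defensive.
Import Order.TTheory GRing.Theory Num.Theory.
Import numFieldNormedType.Exports.
Local Open Scope ring_scope.

(* Coordinates of R^(n+3): index 0 = u_1, indices 1..n+1 = p, index n+2 = u_(n+1). *)

Definition Proj (R : realType) (n : nat) : 'M[R]_(n.+1, n.+3) :=
  \matrix_(i < n.+1, j < n.+3) ((j : nat) == i.+1)%:R.

Definition Hpen (R : realType) (n : nat) (P : 'M[R]_(n.+3)) (l : R) : 'M[R]_(n.+3) :=
  invmx (l *: P + (Proj R n)^T *m Proj R n).

Definition embed (R : realType) (n : nat) (u1 : R) (y : 'cV[R]_(n.+1)) (u2 : R)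
  : 'cV[R]_(n.+3) :=
  \col_(j < n.+3)
     (if (j : nat) == 0%N then u1
      else if (j : nat) == n.+2 then u2
      else y (inord (j.-1)) 0).

Definition qform (R : realType) (k : nat) (P : 'M[R]_k) (v : 'cV[R]_k) : R :=
  (v^T *m P *m v) 0 0.

Definition sqnorm (R : realType) (k : nat) (v : 'cV[R]_k) : R :=
  \sum_(i < k) v i 0 ^+ 2.

Definition psd (R : realType) (k : nat) (P : 'M[R]_k) : Prop :=
  forall v : 'cV[R]_k, 0 <= qform P v.

Definition corner (R : realType) (n : nat) (P : 'M[R]_(n.+3)) : 'M[R]_2 :=
  \matrix_(i < 2, j < 2)
     P (if (i : nat) == 0%N then ord0 else ord_max)
       (if (j : nat) == 0%N then ord0 else ord_max).

(* For l > 0 put M(l) = l P + Pi^T Pi, so that Hpen P l = M(l)^-1.  Two facts drive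
   everything: the energy identity z^T M(l) z = l z^T P z + |Pi z|^2, and the end rows of
   Pi^T Pi vanish, so the end entries of M(l) z are l times those of P z.  Since the
   corner of P is invertible, z is controlled by its knot part Pi z together with the end
   entries of P z; hence M(l) is invertible, and the error z = Hpen P l b - v of a
   candidate limit v can be estimated.  As l -> 0+ the limit keeps the knot values y and
   takes end values solving the corner system (so that the end entries of P v vanish),
   and |z| = O(l); as l -> +oo the limit is the least-squares fit v in ker P, whose
   residual Pi^T (y - Pi v) lies in the range of P, and |z|^2 = O(1/l). *)

From HB Require Import structures.
From mathcomp Require Import all_boot all_order all_algebra.
From mathcomp Require Import all_classical all_reals all_analysis.
From mathcomp Require Import zify ring lra.
Set Implicit Arguments. Unset Strict Implicit. Unset Printing Implicit Defensive.
Import Order.TTheory GRing.Theory Num.Theory.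
Import numFieldNormedType.Exports.
Local Open Scope ring_scope.
Local Open Scope classical_set_scope.

Section Dot.
Variables (R : comPzRingType) (k : nat).
Implicit Types (u v w : 'cV[R]_k).

Definition dot u v : R := (u^T *m v) 0 0.

Lemma dotC u v : dot u v = dot v u.
Proof. by rewrite /dot -[v^T *m u]trmxK trmx_mul trmxK [RHS]mxE. Qed.

Lemma dotDr u v w : dot u (v + w) = dot u v + dot u w.
Proof. by rewrite /dot mulmxDr mxE. Qed.

Lemma dotDl u v w : dot (u + v) w = dot u w + dot v w.
Proof. by rewrite dotC dotDr !(dotC w). Qed.

Lemma dotZr a u v : dot u (a *: v) = a * dot u v.
Proof. by rewrite /dot -scalemxAr mxE. Qed.

Lemma dotZl a u v : dot (a *: u) v = a * dot u v.
Proof. by rewrite dotC dotZr dotC. Qed.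

Lemma dot0r u : dot u 0 = 0.
Proof. by rewrite /dot mulmx0 mxE. Qed.

End Dot.

Lemma dot_mulmxr (R : comPzRingType) k m (A : 'M[R]_(k, m)) (u : 'cV[R]_k) (v : 'cV[R]_m) :
  dot u (A *m v) = dot (A^T *m u) v.
Proof. by rewrite /dot mulmxA trmx_mul trmxK. Qed.

Section Quadratic.
Variables (R : realType) (k : nat).
Implicit Types (u v : 'cV[R]_k).

Lemma sqnorm_dot v : sqnorm v = dot v v.
Proof. by rewrite /sqnorm /dot mxE; apply: eq_bigr => i _; rewrite mxE expr2. Qed.

Lemma sqnorm_ge0 v : 0 <= sqnorm v.
Proof. by apply: sumr_ge0 => i _; rewrite sqr_ge0. Qed.

Lemma sqnormD u v : sqnorm (u + v) = sqnorm u + 2 * dot u v + sqnorm v.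
Proof. by rewrite !sqnorm_dot dotDl !dotDr (dotC v u); ring. Qed.

Lemma qformE (P : 'M[R]_k) v : qform P v = dot v (P *m v).
Proof. by rewrite /qform /dot mulmxA. Qed.

Lemma qformD (P : 'M[R]_k) u v : P^T = P ->
  qform P (u + v) = qform P u + 2 * dot u (P *m v) + qform P v.
Proof.
move=> sP; rewrite !qformE mulmxDr dotDl !dotDr.
by rewrite [dot v _]dot_mulmxr sP (dotC (P *m v)); ring.
Qed.

Lemma qformZ (P : 'M[R]_k) a v : qform P (a *: v) = a ^+ 2 * qform P v.
Proof. by rewrite !qformE -scalemxAr dotZl dotZr mulrA expr2. Qed.

End Quadratic.

Section MatrixNorm.
Variable R : realType.

Lemma mx_norm_le m n (A : 'M[R]_(m, n)) e :
  0 <= e -> (forall i j, `|A i j| <= e) -> `|A| <= e.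
Proof.
move=> e0 Ae; rewrite [leLHS]/Num.Def.normr /= mx_normrE.
by apply/bigmax_leP; split => // -[i j] _; exact: Ae.
Qed.

Lemma mx_entry_le_norm m n (A : 'M[R]_(m, n)) i j : `|A i j| <= `|A|.
Proof.
by rewrite [leRHS]/Num.Def.normr /= mx_normrE; apply/bigmax_geP; right; exists (i, j).
Qed.

Lemma mx_norm_mulmx_le m p n (A : 'M[R]_(m, p)) (B : 'M[R]_(p, n)) :
  `|A *m B| <= p%:R * `|A| * `|B|.
Proof.
apply: mx_norm_le => [|i j]; first by rewrite !mulr_ge0.
rewrite -mulrA mulr_natl -[p in _ *+ p]card_ord -sumr_const mxE.
apply: le_trans (ler_norm_sum _ _ _) _; apply: ler_sum => l _; rewrite normrM.
by apply: ler_pM => //; exact: mx_entry_le_norm.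
Qed.

Lemma mx_norm_sqr_le_sqnorm k (v : 'cV[R]_k) : `|v| ^+ 2 <= sqnorm v.
Proof.
change (mx_norm v ^+ 2 <= sqnorm v).
have [->|/mx_norm_neq0 [[i j] /= ->]] := eqVneq (mx_norm v) 0.
  by rewrite expr0n sqnorm_ge0.
rewrite (ord1 j) real_normK ?num_real // /sqnorm (bigD1 i) //= lerDl.
by apply: sumr_ge0 => l _; rewrite sqr_ge0.
Qed.

End MatrixNorm.

Section Kernel.
Variables (F : fieldType) (m k : nat) (B : 'M[F]_(m, k)).

Lemma mulmx_trkermx_tr : B *m (kermx B^T)^T = 0.
Proof. by rewrite -[LHS]trmxK trmx_mul trmxK mulmx_ker trmx0. Qed.

Lemma kermx_trP (z : 'cV[F]_k) : B *m z = 0 -> exists t, z = (kermx B^T)^T *m t.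
Proof.
move=> Bz; have /submxP [D zD] : (z^T <= kermx B^T)%MS.
  by apply/sub_kermxP; rewrite -trmx_mul Bz trmx0.
by exists D^T; rewrite -trmx_mul -zD trmxK.
Qed.

Lemma submx_kernel_orthogonal (x : 'rV[F]_k) :
  (forall z : 'cV[F]_k, B *m z = 0 -> x *m z = 0) -> (x <= B)%MS.
Proof.
move=> xB; rewrite submxE; apply/eqP/matrixP => i j; rewrite (ord1 i).
have Bz : B *m (cokermx B *m (delta_mx j 0 : 'cV_k)) = 0.
  by rewrite mulmxA mulmx_coker mul0mx.
by have := congr1 (fun M : 'M[F]_1 => M 0 0) (xB _ Bz); rewrite mulmxA -colE !mxE.
Qed.

End Kernel.

Lemma mulmx_tr_eq0 (R : realFieldType) m k (A : 'M[R]_(m, k)) : A *m A^T = 0 -> A = 0.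
Proof.
move=> AAt; apply/matrixP => i j; rewrite mxE; apply/eqP; rewrite -sqrf_eq0.
have : (A *m A^T) i i = 0 by rewrite AAt mxE.
rewrite mxE (bigD1 j) //= mxE -expr2 => /eqP; rewrite paddr_eq0 ?sqr_ge0 //.
  by case/andP.
by apply: sumr_ge0 => l _; rewrite mxE -expr2 sqr_ge0.
Qed.

Section GramRank.
Variables (R : realFieldType) (m k : nat) (A : 'M[R]_(m, k)).

Lemma mxrank_trmx_mul_self : \rank (A^T *m A) = \rank A.
Proof.
have kerE : (kermx (A^T *m A) == kermx A^T)%MS.
  apply/andP; split; apply/sub_kermxP; last by rewrite mulmxA mulmx_ker mul0mx.
  apply: mulmx_tr_eq0; rewrite trmx_mul trmxK mulmxA -(mulmxA _ A^T).
  by rewrite mulmx_ker mul0mx.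
move/eqmx_rank: kerE; rewrite !mxrank_ker mxrank_tr.
by have := rank_leq_row (A^T *m A); have := rank_leq_col A; lia.
Qed.

Lemma submx_trmx_mul_self : (A <= A^T *m A)%MS.
Proof.
by rewrite -(geq_leqif (mxrank_leqif_sup (submxMl _ _))) mxrank_trmx_mul_self.
Qed.

End GramRank.

Section LeastSquares.
Variables (R : realType) (m k : nat) (y : 'cV[R]_m).

Lemma normal_equations (A : 'M[R]_(m, k)) : exists t, A^T *m (y - A *m t) = 0.
Proof.
have /submxP [s Hs] : (y^T *m A <= A^T *m A)%MS.
  exact: submx_trans (submxMl _ _) (submx_trmx_mul_self A).
exists s^T; apply: trmx_inj; rewrite mulmxBr trmx0 linearB /= !trmx_mul !trmxK.
by rewrite Hs mulmxA subrr.
Qed.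

Lemma normal_equations_min (A : 'M[R]_(m, k)) t :
  A^T *m (y - A *m t) = 0 -> forall t', sqnorm (y - A *m t) <= sqnorm (y - A *m t').
Proof.
move=> At t'; have -> : y - A *m t' = (y - A *m t) + A *m (t - t').
  by rewrite mulmxBr addrA subrK.
rewrite [in leRHS]sqnormD dot_mulmxr At dotC dot0r mulr0 addr0 lerDl; exact: sqnorm_ge0.
Qed.

(* [v] minimises [|y - B v|] on [ker P]; the residual is then orthogonal to [ker P],
   i.e. lies in the range of [P^T]. *)
Lemma kernel_least_squares (P : 'M[R]_k) (B : 'M[R]_(m, k)) :
  exists v s, [/\ P *m v = 0,
    forall w, P *m w = 0 -> sqnorm (y - B *m v) <= sqnorm (y - B *m w)
    & B^T *m (y - B *m v) = P^T *m s].
Proof.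
set K := (kermx P^T)^T.
have [t At] := normal_equations (B *m K).
have yBK t' : y - B *m (K *m t') = y - B *m K *m t' by rewrite mulmxA.
exists (K *m t); rewrite yBK; set r := y - B *m K *m t.
have /submxP [s Hs] : ((B^T *m r)^T <= P)%MS.
  apply: submx_kernel_orthogonal => z /kermx_trP [t' ->].
  rewrite trmx_mul trmxK mulmxA -(mulmxA r^T) -[r^T *m _]trmxK trmx_mul trmxK.
  by rewrite At trmx0 mul0mx.
exists s^T; split.
- by rewrite mulmxA mulmx_trkermx_tr mul0mx.
- by move=> w /kermx_trP [t' ->]; rewrite yBK; exact: normal_equations_min.
- by rewrite -[LHS]trmxK Hs trmx_mul.
Qed.

End LeastSquares.

Section SquaredRates.
Variables (R : realType) (V : normedModType R) (f : R -> V) (v : V) (C : R).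

Lemma cvg_at_right0_of_sqr_le :
  (forall l, 0 < l -> `|f l - v| ^+ 2 <= C * l ^+ 2) -> f l @[l --> 0^'+] --> v.
Proof.
move=> f_le; apply/cvgrPdist_le => e e0.
have C1 : 0 < `|C| + 1 by rewrite ltr_pwDr.
near=> l.
have l0 : 0 < l by near: l; exact: nbhs_right_gt.
have le : l < e / (`|C| + 1) by near: l; apply: nbhs_right_lt; rewrite divr_gt0.
rewrite distrC -ler_sqr ?nnegrE ?normr_ge0 ?(ltW e0) //; apply: le_trans (f_le l l0) _.
rewrite ltr_pdivlMr // in le.
have le2 : (l * (`|C| + 1)) ^+ 2 <= e ^+ 2.
  by rewrite ler_sqr ?nnegrE ?(ltW e0) ?mulr_ge0 ?(ltW l0) ?(ltW C1) // (ltW le).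
have := ler_norm C; have := sqr_ge0 l; nra.
Unshelve. all: by end_near. Qed.

Lemma cvg_pinfty_of_sqr_le :
  (forall l, 1 <= l -> `|f l - v| ^+ 2 <= C / l) -> f l @[l --> +oo] --> v.
Proof.
move=> f_le; apply/cvgrPdist_le => e e0.
near=> l.
have l1 : 1 <= l by near: l; apply: nbhs_pinfty_ge; rewrite num_real.
have le : (`|C| + 1) / e ^+ 2 < l.
  by near: l; apply: nbhs_pinfty_gt; rewrite num_real.
rewrite distrC -ler_sqr ?nnegrE ?normr_ge0 ?(ltW e0) //; apply: le_trans (f_le l l1) _.
rewrite ltr_pdivrMr ?exprn_gt0 // in le.
rewrite ler_pdivrMr ?(lt_le_trans ltr01) //.
have := ler_norm C; nra.
Unshelve. all: by end_near. Qed.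

End SquaredRates.

Lemma mulmx_trrowsub (R : pzRingType) m k k' (f : 'I_k' -> 'I_k) (A : 'M[R]_(m, k)) :
  A *m (rowsub f 1%:M)^T = colsub f A.
Proof.
apply/matrixP => i j; rewrite !mxE (bigD1 (f j)) //= !mxE eqxx mulr1 big1 ?addr0 //.
by move=> l /negbTE l_neq; rewrite !mxE eq_sym l_neq mulr0.
Qed.

Lemma rowsub_mul_trrowsub_inj (R : pzRingType) m k (f : 'I_m -> 'I_k) :
  injective f -> rowsub f 1%:M *m (rowsub f 1%:M)^T = 1%:M :> 'M[R]_m.
Proof.
by move=> f_inj; rewrite mulmx_trrowsub; apply/matrixP => i j; rewrite !mxE (inj_eq f_inj).
Qed.

Lemma rowsub_mul_trrowsub_disjoint (R : pzRingType) m m' k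
    (f : 'I_m -> 'I_k) (g : 'I_m' -> 'I_k) :
  (forall i j, f i != g j) -> rowsub f 1%:M *m (rowsub g 1%:M)^T = 0 :> 'M[R]_(m, m').
Proof.
move=> fg; rewrite mulmx_trrowsub; apply/matrixP => i j.
by rewrite !mxE (negbTE (fg i j)).
Qed.

Section Coordinates.
Variables (R : realType) (n : nat).

Definition midx (i : 'I_n.+1) : 'I_n.+3 := inord i.+1.
Definition endidx (k : 'I_2) : 'I_n.+3 := if (k : nat) == 0%N then ord0 else ord_max.
Definition Ends : 'M[R]_(2, n.+3) := rowsub endidx 1%:M.

Local Notation Pi := (Proj R n).

Lemma midx_val i : midx i = i.+1 :> nat.
Proof. by rewrite inordK //; move: (ltn_ord i); lia. Qed.

Lemma midx_inj : injective midx.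
Proof. by move=> i j E; apply/val_inj/succn_inj; rewrite -!midx_val E. Qed.

Lemma endidx_inj : injective endidx.
Proof.
move=> k k' /(congr1 val); rewrite /endidx; move: (ltn_ord k) (ltn_ord k').
by case: eqP => Hk; case: eqP => Hk' //= *; apply: val_inj => /=; lia.
Qed.

Lemma midx_neq_endidx i k : midx i != endidx k.
Proof.
apply/eqP => /(congr1 val) /=; rewrite midx_val /endidx.
by case: eqP => _ /=; move: (ltn_ord i); lia.
Qed.

Lemma ProjE : Pi = rowsub midx 1%:M.
Proof. by apply/matrixP => i j; rewrite !mxE -(inj_eq val_inj) /= midx_val eq_sym. Qed.

Lemma cornerE (P : 'M[R]_n.+3) : corner P = Ends *m P *m Ends^T.
Proof. by rewrite mulmx_trrowsub mul_rowsub_mx mul1mx; apply/matrixP => i j; rewrite !mxE. Qed.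

Lemma mulmx_trProj m (A : 'M[R]_(m, n.+3)) i j : (A *m Pi^T) i j = A i (midx j).
Proof. by rewrite ProjE mulmx_trrowsub mxE. Qed.

Lemma Proj_mul_trProj : Pi *m Pi^T = 1%:M.
Proof. by rewrite ProjE rowsub_mul_trrowsub_inj //; exact: midx_inj. Qed.

Lemma Ends_mul_trEnds : Ends *m Ends^T = 1%:M.
Proof. by rewrite rowsub_mul_trrowsub_inj //; exact: endidx_inj. Qed.

Lemma Proj_mul_trEnds : Pi *m Ends^T = 0.
Proof. by rewrite ProjE rowsub_mul_trrowsub_disjoint //; exact: midx_neq_endidx. Qed.

Lemma Ends_mul_trProj : Ends *m Pi^T = 0.
Proof. by rewrite -[LHS]trmxK trmx_mul trmxK Proj_mul_trEnds trmx0. Qed.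

(* [col_mx Ends Pi] is a square matrix with orthonormal rows, hence orthogonal. *)
Lemma trProj_Proj_add_trEnds_Ends : Pi^T *m Pi + Ends^T *m Ends = 1%:M.
Proof.
pose S : 'M[R]_(n.+3) := col_mx Ends Pi.
have S_orth : S *m S^T = 1%:M.
  rewrite /S (tr_col_mx Ends Pi) (mul_col_row Ends Pi Ends^T Pi^T).
  rewrite Proj_mul_trProj Proj_mul_trEnds Ends_mul_trProj Ends_mul_trEnds.
  by rewrite -scalar_mx_block.
by have := mulmx1C S_orth; rewrite /S (tr_col_mx Ends Pi) (mul_row_col Ends^T Pi^T) addrC.
Qed.

Lemma Proj_Ends_decomp m (z : 'M[R]_(n.+3, m)) : z = Pi^T *m (Pi *m z) + Ends^T *m (Ends *m z).
Proof. by rewrite !mulmxA -mulmxDl trProj_Proj_add_trEnds_Ends mul1mx. Qed.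

Lemma Proj_embed a b (y : 'cV[R]_n.+1) : Pi *m embed a y b = y.
Proof.
apply/matrixP => i j; rewrite (ord1 j) ProjE mul_rowsub_mx mul1mx !mxE midx_val /=.
have -> : (i.+1 == n.+2) = false by apply/negbTE; move: (ltn_ord i); lia.
by rewrite inord_val.
Qed.

Lemma Ends_embed a b (y : 'cV[R]_n.+1) : Ends *m embed a y b = \col_(k < 2) [:: a; b]`_k.
Proof.
apply/matrixP => k j; rewrite (ord1 j) mul_rowsub_mx mul1mx !mxE /endidx.
by case: k => [[|[|//]] ?]; rewrite /= ?eqxx.
Qed.

Lemma col2_eta (u : 'cV[R]_2) : \col_(k < 2) [:: u 0 0; u 1 0]`_k = u.
Proof.
apply/matrixP => k j; rewrite (ord1 j) mxE.
by case: k => [[|[|//]] ?]; congr (u _ _); apply: val_inj.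
Qed.

Lemma embedE a b (y : 'cV[R]_n.+1) :
  embed a y b = Pi^T *m y + Ends^T *m \col_(k < 2) [:: a; b]`_k.
Proof. by rewrite {1}[embed a y b]Proj_Ends_decomp Proj_embed Ends_embed. Qed.

Lemma norm_bound_Proj_EndsP (P : 'M[R]_n.+3) : corner P \in unitmx ->
  exists K, forall z : 'cV[R]_n.+3, `|z| <= K * (`|Pi *m z| + `|Ends *m (P *m z)|).
Proof.
move=> C_unit; set C := corner P.
have EzE (z : 'cV[R]_n.+3) :
    Ends *m z = invmx C *m (Ends *m (P *m z) - Ends *m P *m Pi^T *m (Pi *m z)).
  have -> : Ends *m (P *m z) = Ends *m P *m Pi^T *m (Pi *m z) + C *m (Ends *m z).
    by rewrite {1}[z]Proj_Ends_decomp /C cornerE !mulmxDr !mulmxA.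
  by rewrite addrC addKr mulKmx.
pose c1 := (n.+1)%:R * `|Pi^T|; pose c2 := 2%:R * `|Ends^T|.
pose c3 := 2%:R * `|invmx C|; pose c4 := (n.+1)%:R * `|Ends *m P *m Pi^T|.
exists (c1 + c2 * c3 * (1 + c4)) => z.
set a := `|Pi *m z|; set b := `|Ends *m (P *m z)|.
have Ez : `|Ends *m z| <= c3 * (b + c4 * a).
  rewrite EzE (le_trans (mx_norm_mulmx_le _ _)) // -/c3 ler_wpM2l ?mulr_ge0 //.
  rewrite (le_trans (ler_normB _ _)) // lerD2l (le_trans (mx_norm_mulmx_le _ _)) //.
have z_le : `|z| <= c1 * a + c2 * `|Ends *m z|.
  rewrite {1}[z]Proj_Ends_decomp (le_trans (ler_normD _ _)) //.
  by rewrite lerD // (le_trans (mx_norm_mulmx_le _ _)).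
have [c10 c20 c30 c40] : [/\ 0 <= c1, 0 <= c2, 0 <= c3 & 0 <= c4].
  by split; rewrite mulr_ge0.
have a0 : 0 <= a := normr_ge0 _; have b0 : 0 <= b := normr_ge0 _.
apply: (le_trans z_le); apply: (le_trans (lerD (lexx _) (ler_wpM2l c20 Ez))).
have := mulr_ge0 c10 b0; have := mulr_ge0 (mulr_ge0 c20 c30) a0.
have := mulr_ge0 (mulr_ge0 (mulr_ge0 c20 c30) c40) b0.
nra.
Qed.

Lemma embed0 (y : 'cV[R]_n.+1) : embed 0 y 0 = Pi^T *m y.
Proof.
rewrite embedE; have -> : \col_(k < 2) [:: 0; 0]`_k = 0 :> 'cV[R]_2.
  by apply/matrixP => k j; rewrite !mxE; case: k => [[|[|//]] ?].
by rewrite mulmx0 addr0.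
Qed.

End Coordinates.

Section PenalizedSmoothing.
Variables (R : realType) (n : nat) (P : 'M[R]_n.+3).
Hypotheses (P_sym : P^T = P) (P_psd : psd P) (corner_unit : corner P \in unitmx).
Local Notation Pi := (Proj R n).
Local Notation Ends := (@Ends R n).

Definition penmx l : 'M[R]_n.+3 := l *: P + Pi^T *m Pi.

Lemma penmx_sym l : (penmx l)^T = penmx l.
Proof. by rewrite /penmx linearD linearZ /= P_sym trmx_mul trmxK. Qed.

Lemma penmx_energy l (z : 'cV[R]_n.+3) :
  dot z (penmx l *m z) = l * qform P z + sqnorm (Pi *m z).
Proof.
rewrite /penmx mulmxDl -scalemxAl dotDr dotZr -qformE -mulmxA dot_mulmxr trmxK.
by rewrite sqnorm_dot.
Qed.

Lemma Ends_P_penmx l (z : 'cV[R]_n.+3) : 0 < l ->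
  Ends *m (P *m z) = l^-1 *: (Ends *m (penmx l *m z)).
Proof.
move=> l0; rewrite /penmx mulmxDl mulmxDr -scalemxAl -scalemxAr !mulmxA.
by rewrite Ends_mul_trProj !mul0mx addr0 scalerA mulVf ?gt_eqF // scale1r.
Qed.

Lemma penmx_unit l : 0 < l -> penmx l \in unitmx.
Proof.
move=> l0; have [K zK] := norm_bound_Proj_EndsP corner_unit.
have ker0 (z : 'cV[R]_n.+3) : penmx l *m z = 0 -> z = 0.
  move=> Mz; have := penmx_energy l z; rewrite Mz dot0r => energy0.
  have Piz : `|Pi *m z| = 0.
    apply/eqP; rewrite -sqrf_eq0 eq_le sqr_ge0 andbT.
    apply: le_trans (mx_norm_sqr_le_sqnorm _) _.
    have := P_psd z; have := sqnorm_ge0 (Pi *m z); nra.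
  have EPz : Ends *m (P *m z) = 0 by rewrite (Ends_P_penmx z l0) Mz mulmx0 scaler0.
  by apply/eqP; rewrite -normr_le0 (le_trans (zK z)) // Piz EPz normr0 addr0 mulr0.
rewrite -row_free_unit; apply/inj_row_free => v vM; apply: trmx_inj; rewrite trmx0.
by apply: ker0; rewrite -penmx_sym -trmx_mul vM trmx0.
Qed.

Lemma penmx_Hpen l (b : 'cV[R]_n.+3) : 0 < l -> penmx l *m (Hpen P l *m b) = b.
Proof. by move=> l0; rewrite mulmxA mulmxV ?mul1mx //; exact: penmx_unit. Qed.

Lemma sqnorm_Proj_le_penmx_Proj l (z : 'cV[R]_n.+3) h : 0 < l ->
  penmx l *m z = - l *: (Pi^T *m h) -> sqnorm (Pi *m z) <= l ^+ 2 * sqnorm h.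
Proof.
move=> l0 Mz; have := penmx_energy l z.
rewrite Mz dotZr dot_mulmxr trmxK => energy.
have := sqnorm_ge0 (Pi *m z + l *: h); rewrite sqnormD dotZr !sqnorm_dot dotZl dotZr.
have := mulr_ge0 (ltW l0) (P_psd z); rewrite !sqnorm_dot in energy *; nra.
Qed.

Lemma sqnorm_Proj_le_penmx_P l (z : 'cV[R]_n.+3) s : 0 < l ->
  penmx l *m z = P *m s -> l * sqnorm (Pi *m z) <= qform P s.
Proof.
move=> l0 Mz; have := penmx_energy l z; rewrite Mz => energy.
have := P_psd (l *: z + (-1) *: s); rewrite qformD // !qformZ dotZl -scalemxAr dotZr.
have := mulr_ge0 (ltW l0) (P_psd z); have := sqnorm_ge0 (Pi *m z).
nra.
Qed.

Definition ends0 (y : 'cV[R]_n.+1) : 'cV[R]_2 :=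
  - (invmx (corner P) *m (Ends *m P *m Pi^T *m y)).

Definition spline0 (y : 'cV[R]_n.+1) : 'cV[R]_n.+3 := Pi^T *m y + Ends^T *m ends0 y.

Lemma corner_ends0 y : corner P *m ends0 y = - (Ends *m P *m Pi^T *m y).
Proof. by rewrite /ends0 mulmxN mulKVmx. Qed.

Lemma corner_ends0_entry y (k : 'I_2) :
  ends0 y 0 0 * P (endidx n k) ord0 + ends0 y 1 0 * P (endidx n k) ord_max
    = - \sum_(i < n.+1) y i 0 * P (endidx n k) (midx i).
Proof.
have := corner_ends0 y; move: (ends0 y) => u /(congr1 (fun M : 'cV[R]_2 => M k 0)).
rewrite [LHS]mxE big_ord_recl big_ord1 !mxE /=.
have -> : lift ord0 ord0 = 1 :> 'I_2 by exact: val_inj.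
rewrite mulrC [_ * u _ _]mulrC => E.
apply: etrans E _; congr (- _); apply: eq_bigr => i _.
by rewrite mulmx_trProj mul_rowsub_mx mul1mx mxE mulrC.
Qed.

Lemma Ends_P_spline0 y : Ends *m (P *m spline0 y) = 0.
Proof. by rewrite !mulmxDr !mulmxA -cornerE corner_ends0 subrr. Qed.

Lemma Proj_spline0 y : Pi *m spline0 y = y.
Proof.
by rewrite mulmxDr !mulmxA Proj_mul_trProj Proj_mul_trEnds mul1mx mul0mx addr0.
Qed.

Lemma spline0_min y v1 v2 : qform P (spline0 y) <= qform P (embed v1 y v2).
Proof.
set d := \col_(k < 2) [:: v1; v2]`_k - ends0 y.
have -> : embed v1 y v2 = spline0 y + Ends^T *m d.
  by rewrite embedE /spline0 /d mulmxBr -addrA [_ *m ends0 y + _]addrC subrK.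
rewrite qformD // mulmxA dot_mulmxr trmx_mul trmxK P_sym -mulmxA Ends_P_spline0.
by rewrite dotC dot0r mulr0 addr0 lerDl.
Qed.

Lemma Hpen_cvg_spline0 y : Hpen P l *m (Pi^T *m y) @[l --> 0^'+] --> spline0 y.
Proof.
have [K zK] := norm_bound_Proj_EndsP corner_unit.
set v0 := spline0 y; set h := Pi *m (P *m v0).
have Pv0 : P *m v0 = Pi^T *m h.
  by rewrite {1}[P *m v0]Proj_Ends_decomp Ends_P_spline0 mulmx0 addr0.
apply: (cvg_at_right0_of_sqr_le (C := K ^+ 2 * sqnorm h)) => l l0.
set z := _ - v0.
have Mz : penmx l *m z = - l *: (Pi^T *m h).
  rewrite mulmxBr penmx_Hpen // /penmx mulmxDl -scalemxAl -mulmxA Proj_spline0 Pv0.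
  by rewrite opprD addrCA subrr addr0 scaleNr.
have EPz : Ends *m (P *m z) = 0.
  by rewrite (Ends_P_penmx z l0) Mz -scalemxAr mulmxA Ends_mul_trProj mul0mx !scaler0.
have := sqnorm_Proj_le_penmx_Proj l0 Mz; have := mx_norm_sqr_le_sqnorm (Pi *m z).
have := zK z; rewrite EPz normr0 addr0; have := normr_ge0 z.
nra.
Qed.

Lemma Hpen_cvg_pinfty y (v s : 'cV[R]_n.+3) :
  P *m v = 0 -> Pi^T *m (y - Pi *m v) = P *m s ->
  Hpen P l *m (Pi^T *m y) @[l --> +oo] --> v.
Proof.
move=> Pv Hs; have [K zK] := norm_bound_Proj_EndsP corner_unit.
set a := `|Ends *m (P *m s)|.
apply: (cvg_pinfty_of_sqr_le (C := 2 * K ^+ 2 * (qform P s + a ^+ 2))) => l l1.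
have l0 : 0 < l := lt_le_trans ltr01 l1.
set z := _ - v.
have Mz : penmx l *m z = P *m s.
  rewrite mulmxBr penmx_Hpen // /penmx mulmxDl -scalemxAl Pv scaler0 add0r.
  by rewrite -mulmxA -mulmxBr Hs.
have EPz : `|Ends *m (P *m z)| = a / l.
  by rewrite (Ends_P_penmx z l0) Mz normrZ ger0_norm ?invr_ge0 ?(ltW l0) // mulrC.
set b := `|Pi *m z|.
have b2 : b ^+ 2 <= qform P s / l.
  rewrite ler_pdivlMr //; apply: le_trans (sqnorm_Proj_le_penmx_P l0 Mz).
  by rewrite mulrC ler_wpM2l ?(ltW l0) // mx_norm_sqr_le_sqnorm.
have c2 : (a / l) ^+ 2 <= a ^+ 2 / l.
  rewrite expr_div_n ler_wpM2l ?sqr_ge0 // lef_pV2 ?posrE ?exprn_gt0 //.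
  by rewrite expr2 ler_peMl // (ltW l0).
have z_le : `|z| <= K * (b + a / l) by rewrite -EPz; exact: zK.
have z2 : `|z| ^+ 2 <= (K * (b + a / l)) ^+ 2.
  by rewrite ler_sqr ?nnegrE ?normr_ge0 ?(le_trans (normr_ge0 z) z_le).
apply: (le_trans z2); apply: (@le_trans _ _ (2 * K ^+ 2 * (b ^+ 2 + (a / l) ^+ 2))).
  have := sqr_ge0 (b - a / l); have := sqr_ge0 K; nra.
by rewrite -[leRHS]mulrA [(_ + _) / l]mulrDl ler_wpM2l ?(lerD b2 c2) // mulr_ge0 ?sqr_ge0.
Qed.

End PenalizedSmoothing.

Theorem corollary2 (R : realType) (n : nat) (P : 'M[R]_(n.+3))
  (y : 'cV[R]_(n.+1)) :
  (1 <= n)%N ->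
  P^T = P -> psd P -> corner P \in unitmx ->
  (* (1) lambda -> 0+ *)
  (exists u1 u2 : R,
     (forall v1 v2 : R, qform P (embed u1 y u2) <= qform P (embed v1 y v2)) /\
     u1 * P ord0 ord0 + u2 * P ord0 ord_max
       = - \sum_(i < n.+1) y i 0 * P ord0 (inord i.+1) /\
     u1 * P ord_max ord0 + u2 * P ord_max ord_max
       = - \sum_(i < n.+1) y i 0 * P ord_max (inord i.+1) /\
     (Hpen P l *m embed 0 y 0 @[l --> 0^'+] --> embed u1 y u2) /\
     (~ (\sum_(i < n.+1) y i 0 * P ord0 (inord i.+1) = 0 /\
         \sum_(i < n.+1) y i 0 * P ord_max (inord i.+1) = 0) ->
      u1 != 0 \/ u2 != 0)) /\
  (* (2) lambda -> +oo *)
  (exists v : 'cV[R]_(n.+3),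
     P *m v = 0 /\
     (forall w : 'cV[R]_(n.+3), P *m w = 0 ->
        sqnorm (y - Proj R n *m v) <= sqnorm (y - Proj R n *m w)) /\
     (Hpen P l *m embed 0 y 0 @[l --> +oo] --> v)).
Proof.
move=> _ P_sym P_psd C_unit; rewrite embed0; split.
  set u := ends0 P y.
  have e0 := corner_ends0_entry C_unit y 0; have e1 := corner_ends0_entry C_unit y 1.
  have v0E : embed (u 0 0) y (u 1 0) = spline0 P y by rewrite embedE col2_eta.
  exists (u 0 0), (u 1 0); rewrite v0E; split; [|split; [exact: e0|split; [exact: e1|split]]].
  - by move=> v1 v2; exact: spline0_min.
  - exact: Hpen_cvg_spline0.
  - move=> sums_neq0; apply/orP; rewrite -negb_and.
    apply/negP => /andP[/eqP u1 /eqP u2].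
    by apply: sums_neq0; move: e0 e1; rewrite -/u u1 u2 /=; split; lra.
have [v [s [Pv v_min Hs]]] := kernel_least_squares y P (Proj R n).
exists v; split=> //; split=> //.
by apply: Hpen_cvg_pinfty Pv _ => //; rewrite Hs P_sym.
Qed.
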